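(* Let $\lambda>1$, $A=\mathrm{diag}(1,\lambda)$, and $f(x)=\tfrac12 x^TAx$ on $\mathbb{R}^2$, with gradient $g(x)=Ax$. Consider the iteration $x_{k+1}=x_k-\alpha_kg_k$, $g_k=Ax_k$, where $x_1\in\mathbb{R}^2$, $x_2=x_1-\alpha_1g_1$ for some $\alpha_1>0$, and for $k\ge 2$ $$\alpha_k=\gamma_k\frac{s_{k-1}^Ts_{k-1}}{s_{k-1}^Ty_{k-1}}+(1-\gamma_k)\frac{s_{k-1}^Ty_{k-1}}{y_{k-1}^Ty_{k-1}},\qquad s_{k-1}=x_k-x_{k-1},\ y_{k-1}=g_k-g_{k-1},$$ with $\gamma_k\in(0,1)$ for all $k$. Assume $g_1^{(i)}\neq0$ and $g_2^{(i)}\ne0$ for $i=1,2$. Let $q_k=(g_k^{(1)})^2/(g_k^{(2)})^2$, $M_k=\log q_k$, let $\theta$ be a root of $\theta^2-\theta+2=0$, and $\xi_k=M_k+(\theta-1)M_{k-1}$. If $|\xi_2|>8\log\lambda$, then there exists $c_1>0$ such that $$|\xi_k|\ge(\sqrt2-1)\,2^{k/2}c_1\quad\text{for all }k\ge 2.$$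
   Context: $g_k^{(i)}$ denotes the $i$-th component of $g_k$. Under these assumptions all $g_k^{(i)}$ remain nonzero, so $q_k$ and $M_k$ are well defined for all $k\ge1$; $\theta=\frac{1\pm\sqrt7\,i}{2}$ is complex and $|\cdot|$ is the complex modulus. *)

From Stdlib Require Import Reals.
From Coquelicot Require Import Coquelicot.
Open Scope R_scope.

(* Vectors of R^2 as pairs; component i=1 is fst, i=2 is snd. *)
Definition vsub (u v : R * R) : R * R := (fst u - fst v, snd u - snd v).
Definition vscal (a : R) (u : R * R) : R * R := (a * fst u, a * snd u).
Definition dot (u v : R * R) : R := fst u * fst v + snd u * snd v.

Definition Amul (lam : R) (x : R * R) : R * R := (fst x, lam * snd x).

Definition qratio (g : R * R) : R := (fst g) ^ 2 / (snd g) ^ 2.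
Definition Mlog (g : R * R) : R := ln (qratio g).

From Stdlib Require Import Reals Lra Lia.
From Coquelicot Require Import Coquelicot.
Open Scope R_scope.

(* The gradients evolve componentwise,
   g_(k+1) = ((1 - alpha_k) g_k^(1), (1 - lam alpha_k) g_k^(2)), and the two
   BB stepsizes built from s_(k-1), y_(k-1) are Rayleigh-type quotients of
   g_(k-1) alone.  With P, Q the squared components of g_(k-1), any convex
   combination c of them satisfies (lam c - 1) Q <= (1 - c) P <= lam (lam c - 1) Q;
   hence 1/lam < c < 1, no gradient component ever vanishes, and
   delta_k = M_(k+1) - M_k + 2 M_(k-1) = 2 log ((1 - c) P / ((lam c - 1) Q))
   lies in [0, 2 log lam].  Since theta^2 - theta + 2 = 0 we get
   xi_(k+1) = theta xi_k + delta_k with |theta| = sqrt 2, so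
   |xi_(k+1)| >= sqrt 2 |xi_k| - 2 log lam, and this perturbed geometric growth
   started above the fixed point 2 log lam / (sqrt 2 - 1) < 8 log lam gives the
   bound. *)

Definition nonzero_comps (g : R * R) : Prop := fst g <> 0 /\ snd g <> 0.

Definition gstep (lam a : R) (g : R * R) : R * R :=
  ((1 - a) * fst g, (1 - a * lam) * snd g).

Definition bb1 (lam : R) (g : R * R) : R := dot g g / dot g (Amul lam g).

Definition bb2 (lam : R) (g : R * R) : R :=
  dot g (Amul lam g) / dot (Amul lam g) (Amul lam g).

Lemma Amul_descent (lam a : R) (u : R * R) :
  Amul lam (vsub u (vscal a (Amul lam u))) = gstep lam a (Amul lam u).
Proof. destruct u; unfold Amul, vsub, vscal, gstep; simpl; f_equal; ring. Qed.

Lemma dot_vscal (a b : R) (u v : R * R) : dot (vscal a u) (vscal b v) = a * b * dot u v.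
Proof. unfold dot, vscal; simpl; ring. Qed.

Lemma secant_pair_descent (lam a : R) (u : R * R) :
  let v := vsub u (vscal a (Amul lam u)) in
  vsub v u = vscal (- a) (Amul lam u) /\
  vsub (Amul lam v) (Amul lam u) = vscal (- a) (Amul lam (Amul lam u)).
Proof. destruct u; unfold Amul, vsub, vscal; simpl; split; f_equal; ring. Qed.

Lemma BB_secant_stepsize (lam a a' gam : R) (u v : R * R) :
  v = vsub u (vscal a (Amul lam u)) -> a <> 0 ->
  (let s := vsub v u in
   let y := vsub (Amul lam v) (Amul lam u) in
   a' = gam * (dot s s / dot s y) + (1 - gam) * (dot s y / dot y y)) ->
  a' = gam * bb1 lam (Amul lam u) + (1 - gam) * bb2 lam (Amul lam u).
Proof.
  intros -> Ha Ha'.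
  destruct (secant_pair_descent lam a u) as [Hs Hy].
  assert (Ha2 : - a * - a <> 0) by nra.
  rewrite Ha', Hs, Hy, !dot_vscal, !(Rdiv_mult_l_l _ _ _ Ha2); reflexivity.
Qed.

Lemma dot_Cauchy_Schwarz (u v : R * R) : dot u v ^ 2 <= dot u u * dot v v.
Proof.
  destruct u as [u1 u2], v as [v1 v2]; unfold dot; simpl.
  assert (0 <= (u1 * v2 - u2 * v1) ^ 2) by apply pow2_ge_0.
  nra.
Qed.

Lemma dot_Amul_pos (lam : R) (g : R * R) : 0 < lam -> nonzero_comps g ->
  0 < dot g (Amul lam g) /\ 0 < dot (Amul lam g) (Amul lam g).
Proof.
  destruct g as [g1 g2]; intros Hlam [H1 H2]; unfold dot, Amul; simpl in *.
  assert (0 < g1 * g1) by nra. assert (0 < g2 * g2) by nra.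
  split; nra.
Qed.

Lemma bb2_le_bb1 (lam : R) (g : R * R) : 0 < lam -> nonzero_comps g ->
  bb2 lam g <= bb1 lam g.
Proof.
  intros Hlam Hg.
  destruct (dot_Amul_pos lam g Hlam Hg) as [H1 H2].
  pose proof (dot_Cauchy_Schwarz g (Amul lam g)) as HCS.
  unfold bb1, bb2.
  apply (Rle_div_r _ _ (dot g (Amul lam g))); [exact H1|].
  replace (_ / _ * _) with (dot g (Amul lam g) ^ 2 / dot (Amul lam g) (Amul lam g))
    by (field; lra).
  apply Rle_div_l; lra.
Qed.

Lemma convex_comb_between (gam a b : R) : 0 <= gam <= 1 -> b <= a ->
  b <= gam * a + (1 - gam) * b <= a.
Proof. intros; split; nra. Qed.

Lemma BB_interval_cross_bounds (lam c : R) (g : R * R) : 0 < lam -> nonzero_comps g ->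
  bb2 lam g <= c <= bb1 lam g ->
  (lam * c - 1) * snd g ^ 2 <= (1 - c) * fst g ^ 2 <= lam * ((lam * c - 1) * snd g ^ 2).
Proof.
  intros Hlam Hg [Hc2 Hc1].
  destruct (dot_Amul_pos lam g Hlam Hg) as [H1 H2].
  unfold bb1, bb2 in *.
  apply Rle_div_r in Hc1; [|exact H1].
  apply Rle_div_l in Hc2; [|exact H2].
  destruct g as [g1 g2]; unfold dot, Amul in *; simpl in *.
  split; nra.
Qed.

Lemma BB_interval_range (lam c : R) (g : R * R) : 1 < lam -> nonzero_comps g ->
  bb2 lam g <= c <= bb1 lam g -> 1 < lam * c /\ c < 1.
Proof.
  intros Hlam Hg Hc.
  destruct (BB_interval_cross_bounds lam c g ltac:(lra) Hg Hc) as [Hlo Hhi].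
  destruct Hg as [H1 H2].
  assert (HP : 0 < fst g ^ 2) by (apply pow2_gt_0; exact H1).
  assert (HQ : 0 < snd g ^ 2) by (apply pow2_gt_0; exact H2).
  assert (Hc1 : c < 1).
  { destruct (Rlt_or_le c 1) as [|Hge]; [assumption|].
    assert (0 < (lam * c - 1) * snd g ^ 2) by (apply Rmult_lt_0_compat; nra).
    nra. }
  split; [|exact Hc1].
  destruct (Rlt_or_le 1 (lam * c)) as [|Hle]; [assumption|].
  assert (0 < (1 - c) * fst g ^ 2) by (apply Rmult_lt_0_compat; lra).
  assert (0 <= lam * ((1 - lam * c) * snd g ^ 2))
    by (apply Rmult_le_pos; [lra | apply Rmult_le_pos; lra]).
  lra.
Qed.

Lemma gstep_nonzero_comps (lam a : R) (g : R * R) : nonzero_comps g ->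
  a <> 1 -> a * lam <> 1 -> nonzero_comps (gstep lam a g).
Proof.
  intros [H1 H2] Ha Hal; unfold gstep; split; simpl;
    apply Rmult_integral_contrapositive; split; lra.
Qed.

Lemma Mlog_gstep (lam c : R) (g : R * R) : nonzero_comps g -> c <> 1 -> c * lam <> 1 ->
  Mlog (gstep lam c g) = Mlog g + ln ((1 - c) ^ 2 / (1 - c * lam) ^ 2).
Proof.
  intros [H1 H2] Hc Hcl.
  unfold Mlog, qratio, gstep; simpl.
  rewrite <- ln_mult.
  - f_equal; field; lra.
  - apply Rdiv_lt_0_compat; apply pow2_gt_0; assumption.
  - apply Rdiv_lt_0_compat; apply pow2_gt_0; lra.
Qed.

Lemma ln_sqr (x : R) : 0 < x -> ln (x ^ 2) = 2 * ln x.
Proof. intro Hx; rewrite ln_pow by exact Hx; simpl; ring. Qed.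

Lemma BB_log_increment (lam gam : R) (g g' : R * R) :
  1 < lam -> 0 < gam < 1 -> nonzero_comps g -> nonzero_comps g' ->
  let c := gam * bb1 lam g + (1 - gam) * bb2 lam g in
  0 <= Mlog (gstep lam c g') - Mlog g' + 2 * Mlog g <= 2 * ln lam.
Proof.
  intros Hlam Hgam Hg Hg' c.
  assert (Hc : bb2 lam g <= c <= bb1 lam g)
    by (apply convex_comb_between; [lra | apply bb2_le_bb1; [lra | exact Hg]]).
  destruct (BB_interval_cross_bounds lam c g ltac:(lra) Hg Hc) as [Hlo Hhi].
  destruct (BB_interval_range lam c g Hlam Hg Hc) as [Hlc Hc1].
  destruct Hg as [H1 H2].
  assert (HP : 0 < fst g ^ 2) by (apply pow2_gt_0; exact H1).
  assert (HQ : 0 < snd g ^ 2) by (apply pow2_gt_0; exact H2).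
  assert (HY : 0 < (lam * c - 1) * snd g ^ 2) by (apply Rmult_lt_0_compat; lra).
  set (r := (1 - c) * fst g ^ 2 / ((lam * c - 1) * snd g ^ 2)).
  assert (Hr1 : 1 <= r) by (apply Rle_div_r; lra).
  assert (Hr2 : r <= lam) by (apply Rle_div_l; lra).
  assert (Hdelta : Mlog (gstep lam c g') - Mlog g' + 2 * Mlog g = 2 * ln r).
  { rewrite Mlog_gstep by (assumption || lra).
    unfold Mlog at 3; unfold qratio.
    assert (Hq : 0 < fst g ^ 2 / snd g ^ 2) by (apply Rdiv_lt_0_compat; assumption).
    assert (Hm : 0 < (1 - c) ^ 2 / (1 - c * lam) ^ 2)
      by (apply Rdiv_lt_0_compat; apply pow2_gt_0; lra).
    rewrite <- !ln_sqr by lra.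
    transitivity (ln ((1 - c) ^ 2 / (1 - c * lam) ^ 2) + ln ((fst g ^ 2 / snd g ^ 2) ^ 2));
      [ring|].
    rewrite <- ln_mult by (try apply pow2_gt_0; lra).
    f_equal; unfold r; field; lra. }
  rewrite Hdelta; split.
  - apply Rmult_le_pos; [lra|]. rewrite <- ln_1; apply ln_le; lra.
  - apply Rmult_le_compat_l; [lra|]. apply ln_le; lra.
Qed.

Section BB_family.

Variables (lam : R) (g : nat -> R * R) (alpha gamma : nat -> R).

Hypothesis lam_gt1 : 1 < lam.
Hypothesis gamma_range : forall k, 0 < gamma k < 1.
Hypothesis g_step : forall k, g (S (S k)) = gstep lam (alpha (S k)) (g (S k)).
(* Conditional because s_(k-1) = - alpha_(k-1) g_(k-1): the secant quotients are the
   BB quotients of g_(k-1) only when alpha_(k-1) <> 0. *)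
Hypothesis alpha_BB : forall k, alpha (S k) <> 0 ->
  alpha (S (S k)) =
    gamma (S (S k)) * bb1 lam (g (S k)) + (1 - gamma (S (S k))) * bb2 lam (g (S k)).
Hypothesis alpha1_neq0 : alpha 1 <> 0.
Hypothesis g1_nonzero : nonzero_comps (g 1).
Hypothesis g2_nonzero : nonzero_comps (g 2).

Lemma BB_family_nonzero (k : nat) :
  nonzero_comps (g (S k)) /\ nonzero_comps (g (S (S k))) /\ alpha (S k) <> 0.
Proof.
  induction k as [|k [Hg [Hg' Ha]]]; [auto|].
  assert (Hc : bb2 lam (g (S k)) <= alpha (S (S k)) <= bb1 lam (g (S k))).
  { rewrite (alpha_BB k Ha).
    apply convex_comb_between; [specialize (gamma_range (S (S k))); lra|].
    apply bb2_le_bb1; [lra | exact Hg]. }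
  destruct (BB_interval_range _ _ _ lam_gt1 Hg Hc) as [Hlc Hc1].
  split; [exact Hg'|split; [|nra]].
  rewrite g_step; apply gstep_nonzero_comps; [exact Hg' | lra | lra].
Qed.

Lemma BB_family_log_increment (k : nat) :
  0 <= Mlog (g (S (S (S k)))) - Mlog (g (S (S k))) + 2 * Mlog (g (S k)) <= 2 * ln lam.
Proof.
  destruct (BB_family_nonzero k) as [Hg [Hg' Ha]].
  rewrite (g_step (S k)), (alpha_BB k Ha).
  apply BB_log_increment; auto.
Qed.

End BB_family.

Lemma root_X2_subX_add2_Cmod (theta : C) :
  Cplus (Cminus (Cmult theta theta) theta) (RtoC 2) = RtoC 0 -> Cmod theta = sqrt 2.
Proof.
  destruct theta as [a b]; intro Hroot.
  unfold Cplus, Cminus, Copp, Cmult, RtoC in Hroot; simpl in Hroot.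
  injection Hroot as Hre Him.
  assert (Ha : a = 1 / 2).
  { assert (Hb : b * (2 * a - 1) = 0) by lra.
    destruct (Rmult_integral _ _ Hb) as [-> | H]; [nra | lra]. }
  unfold Cmod; simpl; f_equal; subst a; nra.
Qed.

Lemma Cmod_mult_add_real_ge (t z : C) (d : R) :
  Cmod t * Cmod z - Rabs d <= Cmod (Cplus (Cmult t z) (RtoC d)).
Proof.
  pose proof (Cmod_triangle (Cplus (Cmult t z) (RtoC d)) (RtoC (- d))) as Htri.
  replace (Cplus (Cplus (Cmult t z) (RtoC d)) (RtoC (- d))) with (Cmult t z) in Htri
    by (rewrite RtoC_opp; ring).
  rewrite Cmod_mult, Cmod_R, Rabs_Ropp in Htri; lra.
Qed.

Lemma xi_succ (theta : C) (m0 m1 m2 : R) :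
  Cplus (Cminus (Cmult theta theta) theta) (RtoC 2) = RtoC 0 ->
  Cplus (RtoC m2) (Cmult (Cminus theta (RtoC 1)) (RtoC m1)) =
  Cplus (Cmult theta (Cplus (RtoC m1) (Cmult (Cminus theta (RtoC 1)) (RtoC m0))))
        (RtoC (m2 - m1 + 2 * m0)).
Proof.
  intro Hroot.
  rewrite RtoC_plus, RtoC_minus, RtoC_mult.
  transitivity (Cplus
    (Cplus (Cmult theta (Cplus (RtoC m1) (Cmult (Cminus theta (RtoC 1)) (RtoC m0))))
           (RtoC m2 - RtoC m1 + RtoC 2 * RtoC m0))
    (Cmult (Copp (Cplus (Cminus (Cmult theta theta) theta) (RtoC 2))) (RtoC m0)))%C.
  - ring.
  - rewrite Hroot; ring.
Qed.

Lemma xi_Cmod_succ (theta : C) (m0 m1 m2 d : R) :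
  Cplus (Cminus (Cmult theta theta) theta) (RtoC 2) = RtoC 0 ->
  Rabs (m2 - m1 + 2 * m0) <= d ->
  sqrt 2 * Cmod (Cplus (RtoC m1) (Cmult (Cminus theta (RtoC 1)) (RtoC m0))) - d <=
  Cmod (Cplus (RtoC m2) (Cmult (Cminus theta (RtoC 1)) (RtoC m1))).
Proof.
  intros Hroot Hd.
  rewrite (xi_succ theta m0 m1 m2 Hroot), <- (root_X2_subX_add2_Cmod theta Hroot).
  pose proof (Cmod_mult_add_real_ge theta
    (Cplus (RtoC m1) (Cmult (Cminus theta (RtoC 1)) (RtoC m0))) (m2 - m1 + 2 * m0)).
  lra.
Qed.

Lemma geometric_lower_bound (rho d : R) (u : nat -> R) :
  0 <= rho -> rho <> 1 -> (forall n, rho * u n - d <= u (S n)) ->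
  forall n, rho ^ n * (u 0%nat - d / (rho - 1)) + d / (rho - 1) <= u n.
Proof.
  intros Hrho Hrho1 Hrec n.
  induction n as [|n IH]; [simpl; lra|].
  specialize (Hrec n).
  replace (rho ^ S n * (u 0%nat - d / (rho - 1)) + d / (rho - 1))
    with (rho * (rho ^ n * (u 0%nat - d / (rho - 1)) + d / (rho - 1)) - d)
    by (simpl; field; lra).
  assert (rho * (rho ^ n * (u 0%nat - d / (rho - 1)) + d / (rho - 1)) <= rho * u n)
    by (apply Rmult_le_compat_l; assumption).
  lra.
Qed.

Lemma Rpower_2_half (k : nat) : Rpower 2 (INR k / 2) = sqrt 2 ^ k.
Proof.
  unfold Rdiv; rewrite Rmult_comm, <- Rpower_mult, Rpower_sqrt by lra.
  apply Rpower_pow, sqrt_lt_R0; lra.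
Qed.

Lemma sqrt2_growth_lower_bound (d : R) (u : nat -> R) :
  0 <= d -> 4 * d < u 0%nat -> (forall n, sqrt 2 * u n - d <= u (S n)) ->
  exists c1, 0 < c1 /\
    forall n, (sqrt 2 - 1) * Rpower 2 (INR (S (S n)) / 2) * c1 <= u n.
Proof.
  intros Hd Hu0 Hrec.
  assert (Hs2 : sqrt 2 * sqrt 2 = 2) by (apply sqrt_sqrt; lra).
  assert (Hs : 7 / 5 < sqrt 2) by (pose proof (sqrt_pos 2); nra).
  set (e := d / (sqrt 2 - 1)).
  assert (He : 0 <= e <= 4 * d)
    by (unfold e; split; [apply Rdiv_le_0_compat | apply Rle_div_l]; nra).
  exists ((u 0%nat - e) / (2 * (sqrt 2 - 1))); split; [apply Rdiv_lt_0_compat; lra|].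
  intro n.
  pose proof (geometric_lower_bound (sqrt 2) d u (sqrt_pos 2) ltac:(lra) Hrec n) as Hn.
  fold e in Hn.
  rewrite Rpower_2_half.
  assert (0 <= sqrt 2 ^ n) by (apply pow_le, sqrt_pos).
  replace (sqrt 2 ^ S (S n)) with (2 * sqrt 2 ^ n)
    by (simpl; rewrite <- Rmult_assoc, Hs2; reflexivity).
  replace ((sqrt 2 - 1) * (2 * sqrt 2 ^ n) * ((u 0%nat - e) / (2 * (sqrt 2 - 1))))
    with (sqrt 2 ^ n * (u 0%nat - e)) by (field; lra).
  lra.
Qed.

Theorem lemma1 (lam : R) (x : nat -> R * R) (alpha gamma : nat -> R) (theta : C) :
  1 < lam ->
  (forall k, (1 <= k)%nat -> x (S k) = vsub (x k) (vscal (alpha k) (Amul lam (x k)))) ->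
  0 < alpha 1%nat ->
  (forall k, (2 <= k)%nat ->
     let s := vsub (x k) (x (k - 1)%nat) in
     let y := vsub (Amul lam (x k)) (Amul lam (x (k - 1)%nat)) in
     alpha k = gamma k * (dot s s / dot s y) + (1 - gamma k) * (dot s y / dot y y)) ->
  (forall k, 0 < gamma k < 1) ->
  fst (Amul lam (x 1%nat)) <> 0 -> snd (Amul lam (x 1%nat)) <> 0 ->
  fst (Amul lam (x 2%nat)) <> 0 -> snd (Amul lam (x 2%nat)) <> 0 ->
  Cplus (Cminus (Cmult theta theta) theta) (RtoC 2) = RtoC 0 ->
  let xi := fun k : nat =>
    Cplus (RtoC (Mlog (Amul lam (x k))))
          (Cmult (Cminus theta (RtoC 1)) (RtoC (Mlog (Amul lam (x (k - 1)%nat))))) in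
  Cmod (xi 2%nat) > 8 * ln lam ->
  exists c1 : R, 0 < c1 /\
    forall k : nat, (2 <= k)%nat ->
      Cmod (xi k) >= (sqrt 2 - 1) * Rpower 2 (INR k / 2) * c1.
Proof.
  intros Hlam Hx Ha1 Halpha Hgam H11 H12 H21 H22 Hroot xi Hxi2.
  assert (Hdelta : forall k,
    Rabs (Mlog (Amul lam (x (S (S (S k))))) - Mlog (Amul lam (x (S (S k))))
          + 2 * Mlog (Amul lam (x (S k)))) <= 2 * ln lam).
  { intro k; apply Rabs_le.
    enough (0 <= Mlog (Amul lam (x (S (S (S k))))) - Mlog (Amul lam (x (S (S k))))
                 + 2 * Mlog (Amul lam (x (S k))) <= 2 * ln lam) by lra.
    apply (BB_family_log_increment lam (fun k => Amul lam (x k)) alpha gamma);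
      [exact Hlam | exact Hgam | intro j | intros j Hj | lra | split; assumption..].
    - rewrite Hx by lia; apply Amul_descent.
    - apply (BB_secant_stepsize lam (alpha (S j)) _ _ (x (S j)) (x (S (S j))));
        [apply Hx; lia | exact Hj | exact (Halpha (S (S j)) ltac:(lia))]. }
  assert (Hrec : forall n,
      sqrt 2 * Cmod (xi (S (S n))) - 2 * ln lam <= Cmod (xi (S (S (S n)))))
    by (intro n; apply xi_Cmod_succ; [exact Hroot | apply Hdelta]).
  assert (Hln : 0 < ln lam) by (rewrite <- ln_1; apply ln_increasing; lra).
  destruct (sqrt2_growth_lower_bound (2 * ln lam) (fun n => Cmod (xi (S (S n)))))
    as [c1 [Hc1 Hbound]]; [lra | simpl; lra | exact Hrec |].
  exists c1; split; [exact Hc1|].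
  intros k Hk; destruct k as [|[|n]]; [lia | lia |].
  specialize (Hbound n); cbv beta in Hbound; lra.
Qed.
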